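(* Let $f\in\mathbb{Z}_2[x]$, $n\ge2$, and let $\sigma$ be a cycle of $f_n$. If $\sigma$ strongly grows, then its (unique) lift strongly grows. If $\sigma$ weakly grows, then its lift strongly splits.
   Context: $f_n$ is the induced map on $\mathbb{Z}/2^n\mathbb{Z}$, $f_n(x\bmod 2^n)=f(x)\bmod 2^n$. A $k$-cycle of $f_n$ is a tuple $\sigma=(x_1,\dots,x_k)$ of distinct elements with $f_n(x_i)=x_{i+1}$, $f_n(x_k)=x_1$; its lifts are the cycles of $f_{n+1}$ in $\{y\in\mathbb{Z}/2^{n+1}\mathbb{Z}:y\bmod 2^n\in\sigma\}$. For $x\in\mathbb{Z}_2$ set $a_n(x)=(f^k)'(x)$ and $b_n(x)=(f^k(x)-x)/2^n$, evaluated at a representative $x\in\mathbb{Z}_2$ of a point of $\sigma$ (for lifts at level $n+1$ of length $k'$ use $a_{n+1}(x)=(f^{k'})'(x)$, $b_{n+1}(x)=(f^{k'}(x)-x)/2^{n+1}$). $\sigma$ strongly grows if $a_n\equiv1\pmod4$ and $b_n\equiv1\pmod2$; weakly grows if $a_n\equiv3\pmod4$ and $b_n\equiv1\pmod2$; strongly splits if $a_n\equiv1\pmod4$ and $b_n\equiv0\pmod2$; weakly splits if $a_n\equiv3\pmod4$ and $b_n\equiv0\pmod2$ (these conditions do not depend on the chosen representative). *)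

From HB Require Import structures.
From mathcomp Require Import all_boot all_order all_algebra.
From mathcomp Require Import boolp.
From Stdlib Require Import FunctionalExtensionality ProofIrrelevance.

Set Implicit Arguments.
Unset Strict Implicit.
Unset Printing Implicit Defensive.

Import Order.TTheory GRing.Theory Num.Theory.
Local Open Scope ring_scope.

(* The ring Z_2 of 2-adic integers, as the inverse limit of the Z/2^n Z:    *)
(* an element is a sequence of residues x_n in [0, 2^n) (stored as ints)    *)

Definition pow2 (n : nat) : int := 2%:Z ^+ n.

Lemma pow2_gt0 n : 0 < pow2 n.
Proof. by rewrite /pow2 exprn_gt0. Qed.

Lemma pow2_neq0 n : pow2 n != 0.
Proof. by rewrite gt_eqF // pow2_gt0. Qed.

Record Z2 := MkZ2 {
  z2seq : nat -> int ;
  z2coh : forall n, z2seq n = modz (z2seq n.+1) (pow2 n) }.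

HB.instance Definition _ := gen_eqMixin Z2.
HB.instance Definition _ := gen_choiceMixin Z2.

Lemma Z2_ext (x y : Z2) : (forall n, z2seq x n = z2seq y n) -> x = y.
Proof.
case: x => sx hx; case: y => sy hy /= E.
have Es : sx = sy by apply: functional_extensionality.
subst sy; f_equal; apply: proof_irrelevance.
Qed.

Lemma modz_pow2S (a : int) n : modz (modz a (pow2 n.+1)) (pow2 n) = modz a (pow2 n).
Proof.
rewrite {2}(divz_eq a (pow2 n.+1)) /pow2 exprS mulrA.
by rewrite modzMDl.
Qed.

Definition compat (s : nat -> int) :=
  forall n, (s n.+1 = s n %[mod pow2 n])%Z.

Lemma mk_coh (s : nat -> int) (hs : compat s) n :
  modz (s n) (pow2 n) = modz (modz (s n.+1) (pow2 n.+1)) (pow2 n).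
Proof. by rewrite modz_pow2S hs. Qed.

Definition mkZ2 (s : nat -> int) (hs : compat s) : Z2 :=
  @MkZ2 (fun n => modz (s n) (pow2 n)) (mk_coh hs).

Lemma mkZ2E s hs n : z2seq (@mkZ2 s hs) n = modz (s n) (pow2 n).
Proof. by []. Qed.

Lemma z2mod (x : Z2) n : modz (z2seq x n) (pow2 n) = z2seq x n.
Proof. by rewrite [in RHS](z2coh x n) (z2coh x n) modz_mod. Qed.

Lemma compat_cst (c : int) : compat (fun=> c).
Proof. by []. Qed.

Lemma compat_add (x y : Z2) : compat (fun n => z2seq x n + z2seq y n).
Proof. by move=> n; rewrite (z2coh x n) (z2coh y n) modzDml modzDmr. Qed.

Lemma compat_mul (x y : Z2) : compat (fun n => z2seq x n * z2seq y n).
Proof. by move=> n; rewrite (z2coh x n) (z2coh y n) modzMml modzMmr. Qed.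

Lemma compat_opp (x : Z2) : compat (fun n => - z2seq x n).
Proof. by move=> n; rewrite (z2coh x n) modzNm. Qed.

Definition z2zero : Z2 := mkZ2 (compat_cst 0).
Definition z2one : Z2 := mkZ2 (compat_cst 1).
Definition z2add (x y : Z2) : Z2 := mkZ2 (compat_add x y).
Definition z2mul (x y : Z2) : Z2 := mkZ2 (compat_mul x y).
Definition z2opp (x : Z2) : Z2 := mkZ2 (compat_opp x).

Lemma z2addA : associative z2add.
Proof.
by move=> x y z; apply: Z2_ext => n; rewrite !mkZ2E modzDml modzDmr addrA.
Qed.

Lemma z2addC : commutative z2add.
Proof. by move=> x y; apply: Z2_ext => n; rewrite !mkZ2E addrC. Qed.

Lemma z2add0 : left_id z2zero z2add.
Proof. by move=> x; apply: Z2_ext => n; rewrite !mkZ2E modzDml add0r z2mod. Qed.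

Lemma z2addN : left_inverse z2zero z2opp z2add.
Proof. by move=> x; apply: Z2_ext => n; rewrite !mkZ2E modzDml addNr. Qed.

HB.instance Definition _ := GRing.isZmodule.Build Z2 z2addA z2addC z2add0 z2addN.

Lemma z2mulA : associative z2mul.
Proof.
by move=> x y z; apply: Z2_ext => n; rewrite !mkZ2E modzMml modzMmr mulrA.
Qed.

Lemma z2mulC : commutative z2mul.
Proof. by move=> x y; apply: Z2_ext => n; rewrite !mkZ2E mulrC. Qed.

Lemma z2mul1 : left_id z2one z2mul.
Proof. by move=> x; apply: Z2_ext => n; rewrite !mkZ2E modzMml mul1r z2mod. Qed.

Lemma z2mulDl : left_distributive z2mul (@GRing.add Z2).
Proof.
move=> x y z; apply: Z2_ext => n.
change (z2seq (z2mul (z2add x y) z) n =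
        z2seq (z2add (z2mul x z) (z2mul y z)) n).
by rewrite !mkZ2E modzMml mulrDl modzDml modzDmr.
Qed.

Lemma z2one_neq0 : z2one != (0 : Z2).
Proof.
apply/eqP => H; have := f_equal (fun x => z2seq x 1) H.
by change (modz 1 (pow2 1) = modz 0 (pow2 1) -> False).
Qed.

HB.instance Definition _ :=
  GRing.Zmodule_isComNzRing.Build Z2 z2mulA z2mulC z2mul1 z2mulDl z2one_neq0.

Definition red (n : nat) (x : Z2) : int := z2seq x n.

(* Residues mod 2^n are represented by integers r with 0 <= r < 2^n.        *)

Definition fiter (f : {poly Z2}) (k : nat) : {poly Z2} :=
  iter k (fun g => f \Po g) 'X.

(* f_n (r mod 2^n) = f(r) mod 2^n, using the representative r%:~R of r *)
Definition fn (f : {poly Z2}) (n : nat) (r : int) : int := red n f.[r%:~R].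

Definition is_cycle (f : {poly Z2}) (n : nat) (s : seq int) : bool :=
  [&& s != [::], uniq s, all (fun r => (0 <= r) && (r < pow2 n)) s
    & fcycle (fn f n) s].

Definition is_lift (f : {poly Z2}) (n : nat) (s t : seq int) : bool :=
  is_cycle f n.+1 t && all (fun y => modz y (pow2 n) \in s) t.

(* sigma has a unique lift (unique as a cycle: any two lifts consist of the
   same points, i.e. are rotations of each other) *)
Definition unique_lift (f : {poly Z2}) (n : nat) (s : seq int) : Prop :=
  (exists t, is_lift f n s t) /\
  (forall t t', is_lift f n s t -> is_lift f n s t' -> perm_eq t t').

(* a_n(x) = (f^k)'(x) and b_n(x) = (f^k(x) - x)/2^n at the representative
   x = x_1 of the first point of sigma (k = size sigma);
   cycle_type f n s A B  <->  a_n = A (mod 4) and b_n = B (mod 2). *)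
Definition cycle_type (f : {poly Z2}) (n : nat) (s : seq int) (A B : int)
    : Prop :=
  let x : Z2 := (head 0 s)%:~R in
  let P := fiter f (size s) in
  red 2 ((P^`()).[x]) = A /\
  exists b : Z2, (2%:R ^+ n) * b = P.[x] - x /\ red 1 b = B.

Definition strongly_grows f n s := cycle_type f n s 1 1.
Definition weakly_grows f n s := cycle_type f n s 3 1.
Definition strongly_splits f n s := cycle_type f n s 1 0.
Definition weakly_splits f n s := cycle_type f n s 3 0.

(* Let k be the length of the cycle, g = f^k and x a point of it, so that
   g x = x + 2^n b with b odd and g'(x) odd.  A second-order Taylor expansion
   shows that b mod 2 and g'(x) mod 4 do not change when x moves along the
   cycle or by a multiple of 2^n.  Since b is odd, g does not fix x modulo
   2^(n+1) while g o g does, so the points above the cycle form a single cycle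
   of f_(n+1) of length 2k: the unique lift.  Writing g'(x) = 1 + 2a, one gets
   g (g x) = x + 2^(n+1) b (1 + a) modulo 2^(n+2) and (g o g)'(x) = g'(x)^2
   = 1 modulo 4; so the lift strongly grows when g'(x) = 1 modulo 4 and
   strongly splits when g'(x) = 3 modulo 4. *)

From HB Require Import structures.
From mathcomp Require Import all_boot all_order all_algebra.
From mathcomp Require Import zify ring.

Set Implicit Arguments.
Unset Strict Implicit.
Unset Printing Implicit Defensive.

Import Order.TTheory GRing.Theory Num.Theory.
Local Open Scope ring_scope.

Local Notation P2 m := ((2%:R : Z2) ^+ m).

Lemma pow2S m : pow2 m.+1 = pow2 m * 2.
Proof. by rewrite /pow2 exprSr. Qed.

Lemma pow2D a b : pow2 (a + b) = pow2 a * pow2 b.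
Proof. by rewrite /pow2 exprD. Qed.

Lemma modz_modMl (a p q : int) : modz (modz a (p * q)) q = modz a q.
Proof. by rewrite {2}(divz_eq a (p * q)) mulrA modzMDl. Qed.

Lemma redD m (u v : Z2) : red m (u + v) = modz (red m u + red m v) (pow2 m).
Proof. by []. Qed.

Lemma redM m (u v : Z2) : red m (u * v) = modz (red m u * red m v) (pow2 m).
Proof. by []. Qed.

Lemma redN m (u : Z2) : red m (- u) = modz (- red m u) (pow2 m).
Proof. by []. Qed.

Lemma red1 m : red m 1 = modz 1 (pow2 m).
Proof. by []. Qed.

Lemma red0 m : red m 0 = 0.
Proof. by rewrite /red /= mod0z. Qed.

Lemma red_mod m (u : Z2) : modz (red m u) (pow2 m) = red m u.
Proof. exact: z2mod. Qed.

Lemma red_ge0 m (u : Z2) : 0 <= red m u.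
Proof. by rewrite -red_mod modz_ge0 // pow2_neq0. Qed.

Lemma red_lt m (u : Z2) : red m u < pow2 m.
Proof. by rewrite -red_mod ltz_pmod // pow2_gt0. Qed.

Lemma modz_red m j (u : Z2) : modz (red (j + m) u) (pow2 m) = red m u.
Proof.
elim: j => [|j IH]; first by rewrite add0n red_mod.
by rewrite -IH addSn /red (z2coh u (j + m)) /pow2 exprD modz_modMl.
Qed.

Lemma red_int m (r : int) : red m r%:~R = modz r (pow2 m).
Proof.
have red_nat (k : nat) : red m k%:R = modz k (pow2 m).
  elim: k => [|k IH]; first by rewrite red0 mod0z.
  by rewrite -addn1 natrD redD IH red1 modzDm -PoszD.
case: r => k; first exact: red_nat.
by rewrite NegzE mulrNz redN red_nat modzNm.
Qed.

Lemma red_pow2 j m : red j (P2 m) = modz (pow2 m) (pow2 j).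
Proof. by rewrite /pow2 -red_int rmorphXn. Qed.

Lemma red_pow2M m (w : Z2) : red m (P2 m * w) = 0.
Proof. by rewrite redM red_pow2 modzz mul0r mod0z. Qed.

Lemma red_pow2M_le j m (w : Z2) : (j <= m)%N -> red j (P2 m * w) = 0.
Proof. by move=> le_jm; rewrite -(subnKC le_jm) exprD -mulrA red_pow2M. Qed.

Lemma red_addr0 j (x y : Z2) : red j y = 0 -> red j (x + y) = red j x.
Proof. by move=> y0; rewrite redD y0 addr0 red_mod. Qed.

Lemma red_pow2M_succ m (b : Z2) : red m.+1 (P2 m * b) = pow2 m * red 1 b.
Proof.
rewrite redM red_pow2 (@modz_small (pow2 m)); last first.
  by have := pow2_gt0 m; rewrite pow2S; lia.
by rewrite -(modz_red 1 m) addn1 mulz_modr ?pow2_gt0 // -pow2D addn1.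
Qed.

Lemma red_eq0_pow2M m (u : Z2) : red m u = 0 -> exists w, u = P2 m * w.
Proof.
move=> u0; pose W j := divz (red (j + m) u) (pow2 m).
have WE j : W j * pow2 m = red (j + m) u.
  by rewrite /W divzK //; apply/dvdz_mod0P; rewrite modz_red.
have W_compat : compat W.
  move=> j; suff -> : W j = modz (W j.+1) (pow2 j) by rewrite modz_mod.
  apply: (mulIf (pow2_neq0 m)).
  by rewrite WE mulz_modl ?pow2_gt0 // WE -pow2D /red addSn (z2coh u (j + m)).
exists (mkZ2 W_compat); apply: Z2_ext => j.
change (red j u = red j (P2 m * mkZ2 W_compat)).
rewrite redM red_pow2 /red mkZ2E -/(red j _) modzMm mulrC WE addnC.
by rewrite -(modz_red j m u).
Qed.

Lemma red_eq_pow2M m (u v : Z2) : red m u = red m v -> exists w, u = v + P2 m * w.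
Proof.
move=> uv; have [w Hw] : exists w, u - v = P2 m * w.
  by apply: red_eq0_pow2M; rewrite redD redN uv modzDmr subrr mod0z.
by exists w; rewrite -Hw addrC subrK.
Qed.

Lemma red_horner m (p : {poly Z2}) (u v : Z2) :
  red m u = red m v -> red m p.[u] = red m p.[v].
Proof.
move=> uv; elim/poly_ind: p => [|p c IH]; first by rewrite !horner0.
by rewrite !hornerMXaddC !redD !redM IH uv.
Qed.

Lemma red1E (u : Z2) : red 1 u = modz (red 2 u) 2.
Proof. by rewrite -(modz_red 1 1). Qed.

Lemma red1_bit (u : Z2) : red 1 u = 0 \/ red 1 u = 1.
Proof. by have := red_ge0 1 u; have := red_lt 1 u; rewrite /pow2; lia. Qed.

Lemma red2_bound (u : Z2) : 0 <= red 2 u < 4.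
Proof. by have := red_ge0 2 u; have := red_lt 2 u; rewrite /pow2 => ? ->. Qed.

Lemma red1_oddP (a : Z2) : red 1 a = 1 -> exists a1, a = 1 + 2%:R * a1.
Proof.
move=> a_odd; have /red_eq_pow2M [a1 ->] : red 1 a = red 1 1 by rewrite a_odd.
by exists a1; rewrite expr1.
Qed.

Lemma red2_odd (a : Z2) : red 2 (1 + 2%:R * a) = 1 + 2 * red 1 a.
Proof.
rewrite -[2%:R]expr1 redD redM red1 red_pow2 red1E.
have := red2_bound a; rewrite /pow2 /=; set r := red 2 a; lia.
Qed.

Lemma red1_mul_odd (x y : Z2) : red 1 y = 1 -> red 1 (x * y) = red 1 x.
Proof. by move=> y_odd; rewrite redM y_odd mulr1 red_mod. Qed.

Lemma red1_mulr_odd (x y : Z2) : red 1 (x * y) = 1 -> red 1 y = 1.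
Proof.
by rewrite redM; case: (red1_bit y) => ->; rewrite ?mulr0 ?mod0z.
Qed.

Lemma red2_sqr_odd (c : Z2) : red 1 c = 1 -> red 2 (c * c) = 1.
Proof.
move=> /red1_oddP [a ->].
have -> : (1 + 2%:R * a) * (1 + 2%:R * a) = 1 + P2 2 * (a + a ^+ 2) by ring.
by rewrite red_addr0 ?red_pow2M ?red1.
Qed.

Lemma red2_mulIr_odd (c x y : Z2) :
  red 1 c = 1 -> red 2 (x * c) = red 2 (y * c) -> red 2 x = red 2 y.
Proof.
move=> c_odd xy.
have E z : red 2 z = red 2 (z * c * c).
  by rewrite -mulrA redM red2_sqr_odd // mulr1 red_mod.
by rewrite E [RHS]E redM xy -redM.
Qed.

Lemma horner_taylor2 (R : comNzRingType) (p : {poly R}) (u h : R) :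
  exists c, p.[u + h] = p.[u] + h * p^`().[u] + h ^+ 2 * c.
Proof.
elim/poly_ind: p => [|p a [c IH]].
  by exists 0; rewrite deriv0 !horner0; ring.
exists (p^`().[u] + c * (u + h)).
by rewrite derivMXaddC !hornerMXaddC hornerD hornerMX IH; ring.
Qed.

Lemma horner_taylor1 (R : comNzRingType) (p : {poly R}) (u h : R) :
  exists c, p.[u + h] = p.[u] + h * c.
Proof.
have [c ->] := horner_taylor2 p u h.
by exists (p^`().[u] + h * c); ring.
Qed.

Lemma fiterD f i j : fiter f (i + j) = fiter f i \Po fiter f j.
Proof.
rewrite /fiter iterD; elim: i => [|i IH] /=; first by rewrite comp_polyX.
by rewrite IH comp_polyA.
Qed.

Lemma fiter1 f : fiter f 1 = f.
Proof. by rewrite /fiter /= comp_polyXr. Qed.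

Lemma fiterS f i : fiter f i.+1 = f \Po fiter f i.
Proof. by rewrite -addn1 addnC fiterD fiter1. Qed.

Lemma fiterSr f i : fiter f i.+1 = fiter f i \Po f.
Proof. by rewrite -addn1 fiterD fiter1. Qed.

Lemma deriv_fiterSr f i x :
  (fiter f i.+1)^`().[x] = (fiter f i)^`().[f.[x]] * f^`().[x].
Proof. by rewrite fiterSr deriv_comp hornerM horner_comp. Qed.

Lemma deriv_fiterS f i x :
  (fiter f i.+1)^`().[x] = f^`().[(fiter f i).[x]] * (fiter f i)^`().[x].
Proof. by rewrite fiterS deriv_comp hornerM horner_comp. Qed.

Definition cycle_data (g : {poly Z2}) (m : nat) (y : Z2) (A B : int) : Prop :=
  red 2 (g^`().[y]) = A /\ exists2 b, g.[y] = y + P2 m * b & red 1 b = B.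

Lemma cycle_typeE f m s A B :
  cycle_type f m s A B <-> cycle_data (fiter f (size s)) m (head 0 s)%:~R A B.
Proof.
split=> [[dA [b [bE bB]]]|[dA [b bE bB]]]; split=> //; exists b => //.
  by rewrite bE addrC subrK.
by rewrite bE addrAC subrr add0r.
Qed.

Section CycleData.

Variables (m : nat) (A : int).
Hypothesis m_ge2 : (2 <= m)%N.
Hypothesis A_odd : A = 1 \/ A = 3.

Lemma cycle_data_deriv_odd g y B : cycle_data g m y A B -> red 1 (g^`().[y]) = 1.
Proof. by case=> dA _; rewrite red1E dA; case: A_odd => ->. Qed.

Lemma cycle_data_shift g y B h :
  cycle_data g m y A B -> cycle_data g m (y + P2 m * h) A B.
Proof.
move=> dat; have /red1_oddP [a a_def] := cycle_data_deriv_odd dat.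
case: dat => [dA [b gy bB]].
split.
  have [c ->] := horner_taylor1 g^`() y (P2 m * h).
  by rewrite -mulrA red_addr0 // red_pow2M_le.
have [c ->] := horner_taylor2 g y (P2 m * h).
exists (b + 2%:R * (h * a) + P2 m * (h ^+ 2 * c)).
  by rewrite gy a_def; ring.
rewrite red_addr0; last by apply: red_pow2M_le; lia.
by rewrite red_addr0 // -[2%:R]expr1 red_pow2M.
Qed.

Lemma cycle_data_step f k u B :
  cycle_data (fiter f k.+1) m u A B -> cycle_data (fiter f k.+1) m f.[u] A B.
Proof.
move=> dat; have g_odd := cycle_data_deriv_odd dat.
case: dat => [dA [b gu bB]]; set g := fiter f k.+1 in g_odd dA gu *.
have f_odd : red 1 (f^`().[u]) = 1.
  by move: g_odd; rewrite deriv_fiterSr; apply: red1_mulr_odd.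
have [c1 f'E] := horner_taylor1 f^`() u (P2 m * b).
split.
  rewrite -dA; apply: (red2_mulIr_odd f_odd).
  rewrite -deriv_fiterSr deriv_fiterS -/g gu f'E.
  by rewrite mulrDl -!mulrA red_addr0 ?red_pow2M_le // mulrC.
have [c fE] := horner_taylor2 f u (P2 m * b).
exists (b * f^`().[u] + P2 m * (b ^+ 2 * c)).
  by rewrite -horner_comp -fiterSr fiterS horner_comp -/g gu fE; ring.
rewrite red_addr0; last by apply: red_pow2M_le; lia.
by rewrite red1_mul_odd.
Qed.

Lemma cycle_data_orbit f k u B j :
  cycle_data (fiter f k.+1) m u A B ->
  cycle_data (fiter f k.+1) m (fiter f j).[u] A B.
Proof.
move=> dat; elim: j => [|j IH]; first by rewrite /fiter /= hornerX.
by rewrite fiterS horner_comp; apply: cycle_data_step.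
Qed.

Lemma cycle_data_comp g y :
  cycle_data g m y A 1 ->
  cycle_data (g \Po g) m.+1 y 1 (if A == 1 then 1 else 0).
Proof.
move=> dat; have g_odd := cycle_data_deriv_odd dat.
have /red1_oddP [a a_def] := g_odd.
case: dat => [dA [b gy b_odd]].
case: m m_ge2 gy => [//|m'] m'_ge1 gy.
split.
  rewrite deriv_comp hornerM horner_comp gy.
  have [c ->] := horner_taylor1 g^`() y (P2 m'.+1 * b).
  by rewrite mulrDl -!mulrA red_addr0 ?red_pow2M_le // red2_sqr_odd.
have [c gE] := horner_taylor2 g y (P2 m'.+1 * b).
exists (b * (1 + a) + P2 m' * (b ^+ 2 * c)).
  by rewrite horner_comp gy gE gy a_def !exprS; ring.
rewrite red_addr0; last by apply: red_pow2M_le; lia.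
rewrite mulrC red1_mul_odd // -dA a_def red2_odd redD red1 /pow2 /=.
by case: (red1_bit a) => ->.
Qed.

End CycleData.

Definition exact_period (T : Type) (F : T -> T) (x : T) (K : nat) : Prop :=
  [/\ (0 < K)%N, iter K F x = x & forall e, (0 < e < K)%N -> iter e F x <> x].

Section ExactPeriod.

Variables (T : Type) (F : T -> T) (x : T) (K : nat).
Hypothesis per : exact_period F x K.

Lemma exact_period_dvd e : iter e F x = x -> (K %| e)%N.
Proof.
case: per => K_gt0 FK min_K Fe; apply/eqP; case: (posnP (e %% K)) => // r_gt0.
have Fr : iter (e %% K) F x = x.
  by rewrite -[RHS]Fe [in RHS](divn_eq e K) addnC iterD iterM (iter_fix _ FK).
by exfalso; apply: (min_K _ _ Fr); rewrite r_gt0 ltn_pmod.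
Qed.

Lemma exact_period_iter_neq i j : (i < j < K)%N -> iter i F x <> iter j F x.
Proof.
move=> /andP [lt_ij lt_jK] Fij; case: per => _ FK min_K.
have : iter (K - j + i) F x = x by rewrite iterD Fij -iterD subnK ?FK // ltnW.
by apply: min_K; lia.
Qed.

End ExactPeriod.

Section Cycles.

Variables (T : eqType) (F : T -> T).

Lemma exact_period_uniq x K : exact_period F x K -> uniq (traject F x K).
Proof.
move=> per; apply/(uniqP x) => i j; rewrite !inE size_traject => iK jK.
rewrite !nth_traject //; case: (ltngtP i j) => // lt Fij.
  by case: (exact_period_iter_neq per _ Fij); rewrite lt.
by case: (exact_period_iter_neq per _ (esym Fij)); rewrite lt.
Qed.

Lemma exact_period_fcycle x K : exact_period F x K -> fcycle F (traject F x K).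
Proof.
case: K => [[]//|K] [_ FK _].
have E : rcons (traject F (F x) K) x = traject F (F x) K.+1.
  by rewrite trajectSr -iterSr FK.
by rewrite /= E fpath_traject.
Qed.

Lemma fcycle_traject x p :
  fcycle F (x :: p) -> x :: p = traject F x (size p).+1 /\ iter (size p).+1 F x = x.
Proof.
move=> cyc.
have E : rcons (x :: p) x = rcons (traject F x (size p).+1) (iter (size p).+1 F x).
  by rewrite -trajectSr trajectS rcons_cons {1}(fpathE cyc) size_rcons.
by case: (rcons_inj E) => pE xE; split; [rewrite {1}pE | apply: esym].
Qed.

Lemma uniq_fcycle_exact_period x p :
  uniq (x :: p) -> fcycle F (x :: p) -> exact_period F x (size p).+1.
Proof.
move=> xp_uniq /fcycle_traject [xpE Fx]; split=> // e /andP [e_gt0 e_lt] Fe.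
move: xp_uniq; rewrite xpE => /(uniqP x) /(_ 0%N e).
rewrite !inE size_traject !nth_traject // Fe => /(_ isT e_lt erefl) e0.
by rewrite -e0 in e_gt0.
Qed.

Lemma fcycle_iter_mem p r i : fcycle F p -> r \in p -> iter i F r \in p.
Proof.
move=> cyc r_p; elim: i => [//|i IH]; rewrite iterS.
by have /eqP -> := next_cycle cyc IH; rewrite mem_next.
Qed.

End Cycles.

Lemma iter_semiconj (T U : Type) (G : T -> T) (F : U -> U) (pi : T -> U) :
  (forall y, pi (G y) = F (pi y)) -> forall i y, pi (iter i G y) = iter i F (pi y).
Proof. by move=> GF i y; elim: i => [//|i IH]; rewrite !iterS GF IH. Qed.

Lemma exact_period_double (T U : Type) (G : T -> T) (F : U -> U) (pi : T -> U) x K :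
  (forall y, pi (G y) = F (pi y)) -> exact_period F (pi x) K ->
  iter K G x <> x -> iter (K + K) G x = x -> exact_period G x (K + K).
Proof.
move=> GF per GK GKK; have [K_gt0 _ _] := per; split=> [|//|e /andP [e_gt0 e_lt] Ge].
  by rewrite addn_gt0 K_gt0.
have /(exact_period_dvd per) /dvdnP [q eE] : iter e F (pi x) = pi x.
  by rewrite -(iter_semiconj GF) Ge.
have q1 : q = 1%N by move: e_gt0 e_lt; rewrite eE; nia.
by apply: GK; rewrite -{2}Ge eE q1 mul1n.
Qed.

Lemma mod_double_fiber (p y u v : int) :
  0 < p -> 0 <= y < p * 2 -> 0 <= u < p * 2 -> 0 <= v < p * 2 ->
  modz y p = modz u p -> modz v p = modz u p -> u != v -> y = u \/ y = v.
Proof.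
move=> p_gt0 y_rng u_rng v_rng yu vu /eqP u_neq_v.
have /dvdzP [c yuE] : (p %| y - u)%Z by rewrite -eqz_mod_dvd yu.
have /dvdzP [d vuE] : (p %| v - u)%Z by rewrite -eqz_mod_dvd vu.
have c_rng : -2 < c < 2 by nia.
have d_rng : -2 < d < 2 by nia.
have [cE|[cE|cE]] : c = -1 \/ c = 0 \/ c = 1 by lia.
all: have [dE|[dE|dE]] : d = -1 \/ d = 0 \/ d = 1 by lia.
all: rewrite cE in yuE; rewrite dE in vuE; lia.
Qed.

Lemma pow2_rangeS m (r : int) : 0 <= r < pow2 m -> 0 <= r < pow2 m.+1.
Proof. by have := pow2_gt0 m; rewrite pow2S; lia. Qed.

Lemma iter_fn f m r i :
  0 <= r < pow2 m -> iter i (fn f m) r = red m (fiter f i).[r%:~R].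
Proof.
move=> r_rng; elim: i => [|i IH].
  by rewrite /fiter /= hornerX red_int modz_small.
by rewrite iterS IH fiterS horner_comp /fn; apply: red_horner; rewrite red_int red_mod.
Qed.

Lemma fn_modz f m y : modz (fn f m.+1 y) (pow2 m) = fn f m (modz y (pow2 m)).
Proof.
by rewrite /fn -add1n modz_red; apply: red_horner; rewrite !red_int modz_mod.
Qed.

Section GrowingCycleLift.

Variables (f : {poly Z2}) (n : nat) (x0 : int) (s' : seq int) (A : int).
Hypothesis n_ge2 : (2 <= n)%N.
Hypothesis cyc : is_cycle f n (x0 :: s').
Hypothesis A_odd : A = 1 \/ A = 3.
Hypothesis grows : cycle_type f n (x0 :: s') A 1.

Local Notation k := (size s').+1.
Local Notation h := (fn f n).
Local Notation H := (fn f n.+1).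
Local Notation t0 := (traject H x0 (k + k)).

Lemma growing_cycle_data : cycle_data (fiter f k) n x0%:~R A 1.
Proof. exact: (cycle_typeE f n (x0 :: s') A 1).1 grows. Qed.

Lemma cycle_head_range : 0 <= x0 < pow2 n.
Proof. by case/and4P: cyc => _ _ /andP []. Qed.

Lemma cycle_head_rangeS : 0 <= x0 < pow2 n.+1.
Proof. exact/pow2_rangeS/cycle_head_range. Qed.

Lemma cycle_period : x0 :: s' = traject h x0 k /\ exact_period h x0 k.
Proof.
case/and4P: cyc => _ s_uniq _ s_cyc.
by split; [case: (fcycle_traject s_cyc) | apply: uniq_fcycle_exact_period].
Qed.

Lemma lift_orbit_period : exact_period H x0 (k + k).
Proof.
have [_ [b gX b_odd]] := growing_cycle_data.
have [x0_ge0 x0_lt] := andP cycle_head_range.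
apply: (@exact_period_double _ _ _ _ (fun y => modz y (pow2 n))).
- exact: fn_modz.
- by rewrite modz_small ?cycle_head_range //; case: cycle_period.
- rewrite iter_fn ?cycle_head_rangeS // gX redD red_pow2M_succ b_odd red_int.
  rewrite (modz_small cycle_head_rangeS) modz_small; first by have := pow2_gt0 n; lia.
  by have := pow2_gt0 n; rewrite pow2S; lia.
- have [_ [? ggX _]] := cycle_data_comp n_ge2 A_odd growing_cycle_data.
  rewrite iter_fn ?cycle_head_rangeS // fiterD ggX red_addr0 ?red_pow2M //.
  by rewrite red_int modz_small ?cycle_head_rangeS.
Qed.

Lemma lift_orbit_is_lift : is_lift f n (x0 :: s') t0.
Proof.
case/and4P: cyc => _ _ _ s_cyc; apply/andP; split.
  apply/and4P; split.
  - by rewrite addSn.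
  - exact: exact_period_uniq lift_orbit_period.
  - apply/allP => z /trajectP [i _ ->].
    by rewrite iter_fn ?cycle_head_rangeS ?red_ge0 ?red_lt.
  - exact: exact_period_fcycle lift_orbit_period.
apply/allP => z /trajectP [i _ ->].
rewrite (iter_semiconj (@fn_modz f n)) modz_small ?cycle_head_range //.
exact: fcycle_iter_mem s_cyc (mem_head _ _).
Qed.

(* Only two residues mod [2^(n+1)] lie over each point of the cycle, and [t0]
   already contains two distinct ones. *)
Lemma lift_sub_orbit t : is_lift f n (x0 :: s') t -> {subset t <= t0}.
Proof.
move=> /andP [/and4P [_ _ t_rng _] t_red] z z_t.
have [sE [_ hk _]] := cycle_period.
have /trajectP [j j_lt zE] : modz z (pow2 n) \in traject h x0 k.
  by rewrite -sE; apply: (allP t_red).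
have red_iter i : modz (iter i H x0) (pow2 n) = iter i h x0.
  by rewrite (iter_semiconj (@fn_modz f n)) modz_small ?cycle_head_range.
have H_rng i : 0 <= iter i H x0 < pow2 n * 2.
  by rewrite -pow2S iter_fn ?cycle_head_rangeS ?red_ge0 ?red_lt.
have neq : iter j H x0 != iter (j + k) H x0.
  by apply/eqP/(exact_period_iter_neq lift_orbit_period); lia.
have z_rng : 0 <= z < pow2 n * 2 by rewrite -pow2S; apply: (allP t_rng).
have z_red : modz z (pow2 n) = modz (iter j H x0) (pow2 n) by rewrite red_iter zE.
have jk_red : modz (iter (j + k) H x0) (pow2 n) = modz (iter j H x0) (pow2 n).
  by rewrite !red_iter iterD hk.
have [->|->] :=
  mod_double_fiber (pow2_gt0 n) z_rng (H_rng j) (H_rng _) z_red jk_red neq.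
  by apply/trajectP; exists j => //; lia.
by apply/trajectP; exists (j + k)%N => //; lia.
Qed.

Lemma orbit_sub_lift t : is_lift f n (x0 :: s') t -> {subset t0 <= t}.
Proof.
case: t => [|y0 t'] /[dup] t_lift; first by case/andP => /and4P [].
case/andP => /and4P [_ _ _ t_cyc] _ z /trajectP [j _ ->].
have /trajectP [i i_lt y0E] := lift_sub_orbit t_lift (mem_head _ _).
have [_ Hkk _] := lift_orbit_period.
have -> : iter j H x0 = iter (j + (k + k - i)) H y0.
  by rewrite y0E iterD -(iterD (k + k - i)) subnK ?Hkk // ltnW.
exact: fcycle_iter_mem t_cyc (mem_head _ _).
Qed.

Lemma lift_perm_orbit t : is_lift f n (x0 :: s') t -> perm_eq t t0.
Proof.
move=> t_lift; apply: uniq_perm; first by case/andP: t_lift => /and4P [].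
  exact: exact_period_uniq lift_orbit_period.
by move=> z; apply/idP/idP; [apply: lift_sub_orbit | apply: orbit_sub_lift].
Qed.

Lemma lift_cycle_type t :
  is_lift f n (x0 :: s') t -> cycle_type f n.+1 t 1 (if A == 1 then 1 else 0).
Proof.
move=> t_lift; have t_size : size t = (k + k)%N.
  by rewrite (perm_size (lift_perm_orbit t_lift)) size_traject.
case: t t_lift t_size => [|y0 t'] t_lift t_size; first by case/andP: t_lift => /and4P [].
have /trajectP [i _ y0E] := lift_sub_orbit t_lift (mem_head _ _).
have [w yE] : exists w, (y0%:~R : Z2) = (fiter f i).[x0%:~R] + P2 n.+1 * w.
  by apply: red_eq_pow2M; rewrite red_int y0E iter_fn ?cycle_head_rangeS // red_mod.
apply/cycle_typeE; rewrite t_size fiterD [head _ _]/= yE exprSr -mulrA.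
apply: (cycle_data_comp n_ge2 A_odd); apply: (cycle_data_shift n_ge2 A_odd).
exact/(cycle_data_orbit n_ge2 A_odd)/growing_cycle_data.
Qed.

Lemma growing_cycle_lift :
  unique_lift f n (x0 :: s') /\
  forall t, is_lift f n (x0 :: s') t -> cycle_type f n.+1 t 1 (if A == 1 then 1 else 0).
Proof.
split; last exact: lift_cycle_type.
split=> [|t t' /lift_perm_orbit tt0 /lift_perm_orbit t't0].
  by exists t0; apply: lift_orbit_is_lift.
by rewrite (perm_trans tt0) // perm_sym.
Qed.

End GrowingCycleLift.

Theorem proposition3p1 (f : {poly Z2}) (n : nat) (s : seq int) :
  (2 <= n)%N -> is_cycle f n s ->
  (strongly_grows f n s ->
     unique_lift f n s /\
     forall t, is_lift f n s t -> strongly_grows f n.+1 t) /\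
  (weakly_grows f n s ->
     unique_lift f n s /\
     forall t, is_lift f n s t -> strongly_splits f n.+1 t).
Proof.
move=> n_ge2; case: s => [//|x0 s'] cyc.
split=> grows.
  exact: (growing_cycle_lift n_ge2 cyc (or_introl erefl) grows).
exact: (growing_cycle_lift n_ge2 cyc (or_intror erefl) grows).
Qed.
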